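(* The Diophantine equation $$x(x+1)\,y(y+1)=z(z+1)(z+2)(z+3)$$ has infinitely many solutions in positive integers $x,y,z$ satisfying $(z-x)(z-x+2)\neq 0$. *)

From Stdlib Require Import ZArith.
Open Scope Z_scope.

Definition good_solution (x y z : Z) : Prop :=
  0 < x /\ 0 < y /\ 0 < z /\
  x * (x + 1) * y * (y + 1) = z * (z + 1) * (z + 2) * (z + 3) /\
  (z - x) * (z - x + 2) <> 0.

(* Substituting y = x + 2z + 3 turns the equation into a product of two
   factors, one of which vanishes exactly on the negative Pell equation
   u^2 - 2t^2 = -1 with u = 2x + 1 and t = z - x + 1.  The automorphism
   (u, t) |-> (3u + 4t, 2u + 3t) of that equation, started at (7, 5), then
   produces infinitely many solutions, all with z > x. *)

From Stdlib Require Import ZArith Lia.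
Open Scope Z_scope.

Definition pell_defect (x z : Z) : Z := (2*x + 1)^2 + 1 - 2*(z - x + 1)^2.

Lemma consecutive_products_diff (x z : Z) :
  4 * (x*(x+1)*(x+2*z+3)*(x+2*z+4) - z*(z+1)*(z+2)*(z+3))
  = pell_defect x z * (pell_defect x z + (2*z + 3)^2 - 3).
Proof. unfold pell_defect; ring. Qed.

Lemma consecutive_products_eq (x z : Z) :
  pell_defect x z = 0 ->
  x*(x+1)*(x+2*z+3)*(x+2*z+4) = z*(z+1)*(z+2)*(z+3).
Proof.
  intro Hpell.
  pose proof (consecutive_products_diff x z) as Hdiff.
  rewrite Hpell in Hdiff.
  lia.
Qed.

Definition pell_step (p : Z * Z) : Z * Z :=
  let '(x, z) := p in (x + 2*z + 3, 2*x + 5*z + 7).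

Lemma pell_defect_step (x z : Z) :
  pell_defect (x + 2*z + 3) (2*x + 5*z + 7) = pell_defect x z.
Proof. unfold pell_defect; ring. Qed.

Definition pell_solution (n : nat) : Z * Z := Nat.iter n pell_step (3, 7).

Lemma pell_solution_spec (n : nat) :
  let '(x, z) := pell_solution n in
  pell_defect x z = 0 /\ 0 < x < z /\ Z.of_nat n <= x.
Proof.
  induction n as [|n IH].
  - split; [reflexivity | cbn; lia].
  - change (pell_solution (S n)) with (pell_step (pell_solution n)).
    destruct (pell_solution n) as [x z]; cbn [pell_step].
    destruct IH as [Hpell Hbounds].
    rewrite pell_defect_step, Nat2Z.inj_succ.
    lia.
Qed.

Lemma good_solution_of_pell (x z : Z) :
  pell_defect x z = 0 -> 0 < x < z -> good_solution x (x + 2*z + 3) z.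
Proof.
  intros Hpell Hxz.
  pose proof (consecutive_products_eq x z Hpell) as Heq.
  unfold good_solution.
  split; [lia | split; [lia | split; [lia | split]]].
  - rewrite <- Heq; ring.
  - nia.
Qed.

Theorem theorem3 :
  forall N : Z, exists x y z : Z, good_solution x y z /\ N < x + y + z.
Proof.
  intro N.
  pose proof (pell_solution_spec (Z.to_nat N)) as Hspec.
  destruct (pell_solution (Z.to_nat N)) as [x z].
  destruct Hspec as [Hpell [Hxz Hlarge]].
  exists x, (x + 2*z + 3), z.
  split.
  - exact (good_solution_of_pell x z Hpell Hxz).
  - lia.
Qed.
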